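(* Let $A$ be a connectivity class of external positions which is not the frame class, and let $\pi$ be an even permutation of $A$. Then there exists a combination $g$ such that $g(p)=\pi(p)$ for all $p\in A$ and $g(q,l)=(q,l)$ for every external position $q\notin A$ and every $l\in B(q)$.
   Context: Fix integers $k\ge 2$, $n\ge 3$, $M=\{0,\dots,k-1\}$. Positions are $p\in M^n$; $B(p)=\{i:p_i\in\{0,k-1\}\}$, $p$ external if $B(p)\ne\emptyset$ (internal positions are disregarded). For distinct $i,j$, $\psi_{i,j}:M^n\to M^n$ is $(\psi_{i,j}p)_i=k-1-p_j$, $(\psi_{i,j}p)_j=p_i$, other coordinates unchanged; $B(\psi_{i,j}p)=\tau_{ij}(B(p))$ where $\tau_{ij}$ is the transposition of $i,j$. A move is given by distinct $i,j$ and constants $c_l\in M$ ($l\notin\{i,j\}$): it applies $\psi_{i,j}$ to all positions $p$ with $p_l=c_l$ ($l\notin\{i,j\}$) and fixes the others. It also acts on $X=\{(p,l): p\text{ external}, l\in B(p)\}$ (pairs recording the orientation face $l$ of the cubie at $p$) by $(p,l)\mapsto(\psi_{i,j}(p),\tau_{ij}(l))$ for $p$ in its layer, and fixes the other pairs. A combination is a finite sequence of moves, acting on positions and on $X$ by composition. Connectivity classes are the orbits of external positions under combinations. For odd $k$, the frame class is the set of positions with exactly one coordinate in $\{0,k-1\}$ and all other coordinates equal to $(k-1)/2$; for even $k$ there is no frame class. *)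

From mathcomp Require Import all_boot all_fingroup.
Set Implicit Arguments. Unset Strict Implicit. Unset Printing Implicit Defensive.

Section Cube.
Variables k n : nat.

Definition pos := {ffun 'I_n -> 'I_k}.

Definition Bset (p : pos) : {set 'I_n} :=
  [set i | ((p i : nat) == 0) || ((p i : nat) == k.-1)].

Definition external (p : pos) : bool := Bset p != set0.

Definition psi (i j : 'I_n) (p : pos) : pos :=
  [ffun l => if l == i then rev_ord (p j) else if l == j then p i else p l].

Definition transp (i j l : 'I_n) : 'I_n :=
  if l == i then j else if l == j then i else l.

(* a move: (i, j, c) with i != j; c l for l \notin {i,j} are the layer constants
   (values c i, c j are irrelevant) *)
Definition move := ('I_n * 'I_n * pos)%type.

Definition valid_move (m : move) : bool := m.1.1 != m.1.2.

Definition in_layer (m : move) (p : pos) : bool :=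
  [forall l, ((l != m.1.1) && (l != m.1.2)) ==> (p l == m.2 l)].

Definition move_pos (m : move) (p : pos) : pos :=
  if in_layer m p then psi m.1.1 m.1.2 p else p.

(* action on pairs (p, l), l \in B(p) *)
Definition move_X (m : move) (x : pos * 'I_n) : pos * 'I_n :=
  if in_layer m x.1 then (psi m.1.1 m.1.2 x.1, transp m.1.1 m.1.2 x.2) else x.

(* a combination: finite sequence of moves, the first move applied first *)
Definition combination := seq move.

Definition valid_comb (g : combination) : bool := all valid_move g.

Definition comb_pos (g : combination) (p : pos) : pos :=
  foldl (fun q m => move_pos m q) p g.

Definition comb_X (g : combination) (x : pos * 'I_n) : pos * 'I_n :=
  foldl (fun y m => move_X m y) x g.

Definition connectivity_class (A : {set pos}) : Prop :=
  exists p0 : pos, external p0 /\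
    forall q : pos, q \in A <-> exists g : combination, valid_comb g /\ comb_pos g p0 = q.

Definition frame_set : {set pos} :=
  [set p | (#|Bset p| == 1) && [forall i, (i \notin Bset p) ==> ((p i : nat) == k.-1./2)]].

Definition is_frame_class (A : {set pos}) : bool := odd k && (A == frame_set).
End Cube.

(* Call a permutation of A realizable if some combination induces it on A while fixing every
   oriented cubie outside A; realizable permutations form a group.  If every fibre (a position with all its
   faces) except the one over q is fixed by a combination F or by a move H, and both move q,
   then the commutator F H F^-1 H^-1 fixes every fibre off {q, H^-1 q, F^-1 q} and cycles
   these three positions.  For a move m of the plane (i, j) moving q, such an F for H = m^-1
   is the conjugate, by a rotation r of a plane {j, l} through q, of the move of the plane
   (i, j) through the layer of r q; one exists unless all coordinates of q but one equal the
   middle value, which forces A to be the frame class.  So every edge q -- m q of the move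
   graph of A lies on a realizable 3-cycle; connectivity of A spreads these to all 3-cycles
   on A, and 3-cycles generate the even permutations. *)

From mathcomp Require Import all_boot all_fingroup zify.
Set Implicit Arguments. Unset Strict Implicit. Unset Printing Implicit Defensive.

Local Open Scope group_scope.

Section ThreeCycles.
Variable T : finType.
Implicit Types (x y z w : T) (s : {perm T}).

Definition cyc x y z : {perm T} := tperm x y * tperm x z.

Lemma cycE x y z w : x != y -> y != z -> z != x ->
  cyc x y z w = if w == x then y else if w == y then z else if w == z then x else w.
Proof.
move=> xy yz zx; rewrite permM.
have [->|wx] := eqVneq w x; first by rewrite tpermL tpermD // eq_sym.
have [->|wy] := eqVneq w y; first by rewrite tpermR tpermL.
rewrite (@tpermD _ x y w) 1?eq_sym //.
by have [->|wz] := eqVneq w z; [rewrite tpermR | rewrite tpermD // eq_sym].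
Qed.

Lemma cycD x y z w : w != x -> w != y -> w != z -> cyc x y z w = w.
Proof. by move=> wx wy wz; rewrite permM !tpermD // eq_sym. Qed.

Section Distinct.
Variables (x y z : T).
Hypotheses (xy : x != y) (yz : y != z) (zx : z != x).

Lemma cyc1 : cyc x y z x = y. Proof. by rewrite cycE ?eqxx. Qed.
Lemma cyc2 : cyc x y z y = z. Proof. by rewrite cycE // eq_sym (negbTE xy) eqxx. Qed.
Lemma cyc3 : cyc x y z z = x. Proof. by rewrite cycE // (negbTE zx) eq_sym (negbTE yz) eqxx. Qed.

End Distinct.

Lemma cycV x y z : (cyc x y z)^-1 = cyc x z y.
Proof. by rewrite invMg !tpermV. Qed.

Lemma cycJ x y z s : cyc x y z ^ s = cyc (s x) (s y) (s z).
Proof. by rewrite conjMg !tpermJ. Qed.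

Lemma cyc_rot x y z : x != y -> y != z -> z != x -> cyc x y z = cyc y z x.
Proof.
move=> xy yz zx; apply/permP=> w; rewrite !cycE //.
by have [->|] := eqVneq w x; rewrite ?(negbTE xy) ?(eq_sym x z) ?(negbTE zx).
Qed.

Lemma odd_cyc x y z : x != y -> x != z -> odd_perm (cyc x y z) = false.
Proof. by move=> xy xz; rewrite odd_permM !odd_tperm xy xz. Qed.

End ThreeCycles.

Section ThreeCycleGeneration.
Variables (T : finType) (A : {set T}) (R : {perm T} -> Prop).
Hypotheses (RM : forall s t, R s -> R t -> R (s * t)) (RV : forall s, R s -> R s^-1).
Implicit Types (x y z w : T) (s : {perm T}).

Definition Rcyc x y z := [&& x != y, y != z & z != x] /\ R (cyc x y z).

Lemma Rcyc_rot x y z : Rcyc x y z -> Rcyc y z x.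
Proof. by case=> /and3P[xy yz zx] Rc; split; rewrite ?yz ?zx ?xy // -(cyc_rot xy yz zx). Qed.

Lemma Rcyc_swap x y z : Rcyc x y z -> Rcyc y x z.
Proof.
case=> /and3P[xy yz zx] /RV; rewrite cycV => Rc.
by do 2 apply: Rcyc_rot; split; rewrite // eq_sym zx eq_sym yz eq_sym xy.
Qed.

Lemma Rcyc_conj s x y z : R s -> Rcyc x y z -> Rcyc (s x) (s y) (s z).
Proof.
move=> Rs [/and3P[xy yz zx] Rc]; split; first by rewrite !(inj_eq perm_inj) xy yz zx.
by rewrite -cycJ conjgE; apply: RM; [apply: RV | apply: RM].
Qed.

Lemma Rcyc_pair x y z w : Rcyc x y z -> Rcyc x y w -> z != w -> Rcyc x z w.
Proof.
move=> Hz Hw zw; have [/and3P[xy yz zx] _] := Hz; have [/and3P[_ yw wx] _] := Hw.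
have := Rcyc_conj (proj2 (Rcyc_swap Hw)) (Rcyc_swap Hz).
rewrite cyc1 ?cyc2 ?cycD // 1?eq_sym //.
by move/Rcyc_rot/Rcyc_rot/Rcyc_swap.
Qed.

Lemma Rcyc_grow x y z e f :
  Rcyc x y z -> Rcyc z e f -> [\/ e = x, e = y | Rcyc x y e].
Proof.
move=> Hxyz Hzef; have [/and3P[xy yz zx] _] := Hxyz; have [/and3P[ze ef fz] _] := Hzef.
have [->|ex] := eqVneq e x; first by constructor 1.
have [->|ey] := eqVneq e y; first by constructor 2.
constructor 3; have [fx|fx] := eqVneq f x.
  subst f; have Hxz := Rcyc_rot (Rcyc_swap Hxyz).
  by apply: Rcyc_pair Hxz (Rcyc_rot (Rcyc_rot Hzef)) _; rewrite eq_sym.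
have [fy|fy] := eqVneq f y.
  subst f; have Hyz := Rcyc_rot Hxyz.
  by apply/Rcyc_swap/(Rcyc_pair Hyz (Rcyc_rot (Rcyc_rot Hzef))); rewrite eq_sym.
have := Rcyc_conj (proj2 Hzef) Hxyz.
by rewrite cyc1 // !cycD // 1?eq_sym.
Qed.

Section Spread.
Variables a b c : T.
Hypothesis Rabc : Rcyc a b c.

Definition attached y := [\/ y = a, y = b | Rcyc a b y].

Lemma attached_step d e f : attached d -> Rcyc d e f -> attached e.
Proof.
move=> att_d Rdef; have [->|ea] := eqVneq e a; first by constructor 1.
have [->|eb] := eqVneq e b; first by constructor 2.
have Rbca := Rcyc_rot Rabc; have Rcab := Rcyc_rot Rbca.
constructor 3; case: att_d Rdef => [->|->|Rabd] Rdef.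
- case: (Rcyc_grow Rbca Rdef) => [eb'|->//|Rbce]; first by rewrite eb' eqxx in eb.
  by apply/Rcyc_swap/(Rcyc_pair Rbca Rbce); rewrite eq_sym.
- case: (Rcyc_grow Rcab Rdef) => [->//|ea'|Rcae]; first by rewrite ea' eqxx in ea.
  by apply: (Rcyc_pair (Rcyc_swap Rcab) (Rcyc_swap Rcae)); rewrite eq_sym.
by case: (Rcyc_grow Rabd Rdef) => [ea'|eb'|//]; [rewrite ea' eqxx in ea | rewrite eb' eqxx in eb].
Qed.

End Spread.

Lemma Rcyc_all a b : (forall x, x \in A -> x != a -> x != b -> Rcyc a b x) ->
  forall x y z, x \in A -> y \in A -> z \in A -> [&& x != y, y != z & z != x] ->
  Rcyc x y z.
Proof.
move=> Rab.
have Ra : forall x y, x \in A -> y \in A -> x != y -> x != a -> y != a -> Rcyc a x y.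
  move=> x y xA yA xy xa ya.
  have [xb|xb] := eqVneq x b; first by subst x; apply: Rab; rewrite // eq_sym.
  have [yb|yb] := eqVneq y b; first by subst y; apply/Rcyc_rot/Rcyc_swap/Rab.
  exact: Rcyc_pair (Rab x xA xa xb) (Rab y yA ya yb) xy.
move=> x y z xA yA zA /and3P[xy yz zx].
have [xa|xa] := eqVneq x a; first by subst x; apply: Ra; rewrite // eq_sym.
have [ya|ya] := eqVneq y a; first by subst y; apply/Rcyc_rot/Rcyc_rot/Ra; rewrite // eq_sym.
have [za|za] := eqVneq z a; first by subst z; apply/Rcyc_rot/Ra.
apply: (Rcyc_pair (Rcyc_swap (Ra x y xA yA xy xa ya)) (Rcyc_swap (Ra x z xA zA _ xa za))) => //.
by rewrite eq_sym.
Qed.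

End ThreeCycleGeneration.

Section EvenPermutations.
Variable T : finType.
Implicit Types (x y w : T) (s : {perm T}).

Definition moved s := [set x | s x != x].

Lemma permV_neq s x : s x != x -> s^-1 x != x.
Proof. by apply: contraNneq => e; rewrite -{1}e permKV. Qed.

Lemma perm_on_moved A s : perm_on A s = (moved s \subset A).
Proof. by apply: eq_subset => x; rewrite !inE. Qed.

Lemma moved_image s x : (s x \in moved s) = (x \in moved s).
Proof. by rewrite !inE (inj_eq perm_inj). Qed.

Lemma moved_tperm s x : s x != x -> moved s \subset [set x; s x] -> s = tperm x (s x).
Proof.
move=> sx sub; apply/permP=> u; have [->|ux] := eqVneq u x; first by rewrite tpermL.
have [us|us] := eqVneq u (s x).
  rewrite us tpermR; apply/eqP; have : s (s x) \in [set x; s x].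
    by apply: (subsetP sub); rewrite !moved_image inE.
  by rewrite !inE (inj_eq perm_inj) (negbTE sx) orbF.
rewrite tpermD 1?eq_sym //; apply/eqP; apply: contraR ux => su.
by have := subsetP sub u; rewrite !inE su (negbTE us) orbF => /(_ isT).
Qed.

Lemma even_perm_peel s : ~~ odd_perm s -> s != 1 ->
  exists x y w, [/\ [&& x != y, y != w & w != x], [set x; y; w] \subset moved s
    & moved (s * (cyc x y w)^-1) \proper moved s].
Proof.
move=> even_s s1.
have /existsP[x sx] : [exists x, s x != x].
  apply: contraR s1; rewrite negb_exists => /forallP fix_s.
  by apply/eqP/permP => u; rewrite perm1; apply/eqP; move: (fix_s u); rewrite negbK.
set y := s x; have sy : s y != y by rewrite (inj_eq perm_inj).
have /subsetPn[w ws wxy] : ~~ (moved s \subset [set x; y]).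
  by apply: contra even_s => /(moved_tperm sx) ->; rewrite odd_tperm eq_sym.
have xs : x \in moved s by rewrite inE.
have ys : y \in moved s by rewrite inE.
move: wxy; rewrite !inE negb_or => /andP[wx wy]; rewrite inE in ws.
exists x, y, w; split; first by rewrite eq_sym sx eq_sym wy wx.
  by apply/subsetP=> u; rewrite !inE => /orP[/orP[]|] /eqP->.
apply/properP; split; last first.
  by exists x => //; rewrite inE permM cycV cyc3 ?negbK // eq_sym.
apply/subsetP=> u; rewrite !inE permM; apply: contraNN => /eqP su.
have ux : u != x by apply: contraNneq sx => <-; rewrite su.
have uy : u != y by apply: contraNneq sy => <-; rewrite su.
have uw : u != w by apply: contraNneq ws => <-; rewrite su.
by rewrite su cycV cycD.
Qed.

Section Generation.
Variables (A : {set T}) (R : {perm T} -> Prop).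
Hypotheses (R1 : R 1) (RM : forall s t, R s -> R t -> R (s * t)).
Hypothesis R3 : forall x y w, x \in A -> y \in A -> w \in A ->
  [&& x != y, y != w & w != x] -> R (cyc x y w).

Lemma even_perm_on_R s : perm_on A s -> ~~ odd_perm s -> R s.
Proof.
move: {2}#|moved s| (leqnn #|moved s|) => N; elim: N s => [|N IH] s.
  rewrite leqn0 cards_eq0 => /eqP s0 _ _; suff -> : s = 1 by [].
  apply/permP=> u; rewrite perm1; apply/eqP; apply: contraT => su.
  have : u \in moved s by rewrite inE.
  by rewrite s0 inE.
move=> le_sN; rewrite perm_on_moved => sA even_s.
have [-> //|s1] := eqVneq s 1.
have [x [y [w [xyw sub lt_s]]]] := even_perm_peel even_s s1.
have -> : s = (s * (cyc x y w)^-1) * cyc x y w by rewrite mulgKV.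
have /and3P[xy yw wx] := xyw.
apply: RM; last by apply: R3 => //; apply: (subsetP sA); apply: (subsetP sub);
  rewrite !inE eqxx ?orbT.
apply: IH.
- by rewrite -ltnS; apply: leq_trans le_sN; apply: proper_card.
- by rewrite perm_on_moved; apply: subset_trans sA; apply: proper_sub.
- by rewrite odd_permM odd_permV odd_cyc ?addbF // eq_sym.
Qed.

End Generation.

End EvenPermutations.

Section FibredCommutator.
(* [l0] only witnesses that fibres are nonempty, so that fixing a fibre fixes its position. *)
Variables (P L : finType) (l0 : L).
Implicit Types (F : {perm P * L}) (f : {perm P}) (p : P) (u : P * L).

Definition fixes_fibre F p := [forall l, F (p, l) == (p, l)].

Lemma fixes_fibreP F p : reflect (forall l, F (p, l) = (p, l)) (fixes_fibre F p).
Proof. by apply: (iffP forallP) => fx l; apply/eqP. Qed.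

Lemma fixes_fibre_pair F u : fixes_fibre F u.1 -> F u = u.
Proof. by case: u => p l /fixes_fibreP. Qed.

Lemma fixes_fibreV F p : fixes_fibre F p -> fixes_fibre F^-1 p.
Proof. by move/fixes_fibreP=> fx; apply/fixes_fibreP=> l; rewrite -{1}(fx l) permK. Qed.

Section Over.
Variables (F : {perm P * L}) (f : {perm P}).
Hypothesis Ff : forall u, (F u).1 = f u.1.

Lemma fibredV u : (F^-1 u).1 = f^-1 u.1.
Proof. by rewrite -{2}(permKV F u) Ff permK. Qed.

Lemma fixes_fibre_fix p : fixes_fibre F p -> f p = p.
Proof. by move/fixes_fibreP/(_ l0) => fx; rewrite -[p]/((p, l0).1) -Ff fx. Qed.

Lemma fixes_fibreN p : f p != p -> ~~ fixes_fibre F p.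
Proof. by apply: contra => /fixes_fibre_fix ->. Qed.

Lemma fixes_fibre_image p : fixes_fibre F (f p) = fixes_fibre F p.
Proof.
apply/idP/idP => [/fixes_fibreP fx|fx]; last by rewrite (fixes_fibre_fix fx).
apply/fixes_fibreP => l; case E: (F (p, l)) => [p' l'].
have e : p' = f p by rewrite -[p']/((p', l').1) -E Ff.
by apply: (@perm_inj _ F); rewrite E e fx.
Qed.

Lemma fixes_fibre_conj G p : fixes_fibre G (f p) -> fixes_fibre (F * G * F^-1) p.
Proof.
move=> Gfp; apply/fixes_fibreP => l; rewrite !permM.
by rewrite (fixes_fibre_pair (u := F (p, l))) ?permK // Ff.
Qed.

End Over.

Section Commutator.
Variables (F H : {perm P * L}) (f h : {perm P}).
Hypotheses (Ff : forall u, (F u).1 = f u.1) (Hh : forall u, (H u).1 = h u.1).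
Variable q : P.
Hypothesis fibres_disjoint : forall p, p != q -> fixes_fibre F p || fixes_fibre H p.
Hypotheses (fq : f q != q) (hq : h q != q).

Lemma fixes_fibre_H p : p != q -> ~~ fixes_fibre F p -> fixes_fibre H p.
Proof. by move=> pq; case/orP: (fibres_disjoint pq) => ->. Qed.

Lemma fixes_fibre_F p : p != q -> ~~ fixes_fibre H p -> fixes_fibre F p.
Proof. by move=> pq; case/orP: (fibres_disjoint pq) => ->. Qed.

Lemma fixes_fibre_H_fq : fixes_fibre H (f q).
Proof. by apply: fixes_fibre_H => //; rewrite (fixes_fibre_image Ff) (fixes_fibreN Ff). Qed.

Lemma fixes_fibre_H_fVq : fixes_fibre H (f^-1 q).
Proof.
apply: fixes_fibre_H; first exact: permV_neq.
by rewrite -(fixes_fibre_image Ff) permKV (fixes_fibreN Ff).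
Qed.

Lemma fixes_fibre_F_hq : fixes_fibre F (h q).
Proof. by apply: fixes_fibre_F => //; rewrite (fixes_fibre_image Hh) (fixes_fibreN Hh). Qed.

Lemma fixes_fibre_F_hVq : fixes_fibre F (h^-1 q).
Proof.
apply: fixes_fibre_F; first exact: permV_neq.
by rewrite -(fixes_fibre_image Hh) permKV (fixes_fibreN Hh).
Qed.

Lemma commutator_fix u :
  u.1 \notin [set q; h^-1 q; f^-1 q] -> (F * H * F^-1 * H^-1) u = u.
Proof.
case: u => p l; rewrite !inE !negb_or /= => /andP[/andP[pq ph] pf]; rewrite !permM.
have [Fp|nFp] := boolP (fixes_fibre F p).
  rewrite (fixes_fibre_pair (u := (p, l)) Fp); have [Hp|nHp] := boolP (fixes_fibre H p).
    by rewrite !(fixes_fibre_pair (u := (p, l))) ?fixes_fibreV.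
  have hp : h p != q by apply: contraNneq ph => <-; rewrite permK.
  have FHp : fixes_fibre F (H (p, l)).1.
    by rewrite Hh fixes_fibre_F // (fixes_fibre_image Hh).
  by rewrite (fixes_fibre_pair (fixes_fibreV FHp)) permK.
have Hp := fixes_fibre_H pq nFp.
have fp : f p != q by apply: contraNneq pf => <-; rewrite permK.
have HFp : fixes_fibre H (F (p, l)).1.
  by rewrite Ff fixes_fibre_H // (fixes_fibre_image Ff).
by rewrite (fixes_fibre_pair HFp) permK (fixes_fibre_pair (u := (p, l))) ?fixes_fibreV.
Qed.

Lemma commutator_distinct : [&& q != h^-1 q, h^-1 q != f^-1 q & f^-1 q != q].
Proof.
rewrite eq_sym !permV_neq //= andbT; apply: contraNneq (permV_neq hq) => e.
have := fixes_fibre_fix Hh fixes_fibre_H_fVq.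
by rewrite -e permKV => qh; rewrite -qh.
Qed.

Lemma commutator_cycle : f * h * f^-1 * h^-1 = cyc q (h^-1 q) (f^-1 q).
Proof.
have /and3P[qh hf fq'] := commutator_distinct.
have cE p : (f * h * f^-1 * h^-1) p = h^-1 (f^-1 (h (f p))) by rewrite !permM.
apply/permP => p; rewrite cE.
have [->|pq] := eqVneq p q.
  by rewrite (fixes_fibre_fix Hh fixes_fibre_H_fq) permK cyc1.
have [->|ph] := eqVneq p (h^-1 q).
  rewrite (fixes_fibre_fix Ff fixes_fibre_F_hVq) permKV.
  by rewrite (fixes_fibre_fix (fibredV Hh) (fixes_fibreV fixes_fibre_H_fVq)) cyc2.
have [->|pf] := eqVneq p (f^-1 q).
  by rewrite permKV (fixes_fibre_fix (fibredV Ff) (fixes_fibreV fixes_fibre_F_hq)) permK cyc3.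
have out : (p, l0).1 \notin [set q; h^-1 q; f^-1 q].
  by rewrite !inE (negbTE pq) (negbTE ph) (negbTE pf).
rewrite cycD // -[p in RHS](congr1 fst (commutator_fix out)) !permM /=.
by rewrite (fibredV Hh) (fibredV Ff) Hh Ff.
Qed.

End Commutator.
End FibredCommutator.

Section Moves.
Variables k n : nat.
Local Notation pos := (pos k n).
Local Notation move := (move k n).
Local Notation combination := (combination k n).
Implicit Types (p q : pos) (m : move) (g : combination) (i j l : 'I_n).

Lemma psiE i j p l :
  psi i j p l = if l == i then rev_ord (p j) else if l == j then p i else p l.
Proof. by rewrite ffunE. Qed.

Lemma psiK i j p : psi j i (psi i j p) = p.
Proof.
apply/ffunP=> l; rewrite !psiE eqxx.
have [->|lj] := eqVneq l j; first by rewrite rev_ordK.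
have [eli|//] := eqVneq l i.
by subst l; rewrite eq_sym (negbTE lj) eqxx.
Qed.

Lemma transpK i j : cancel (transp i j) (transp j i).
Proof.
move=> l; rewrite /transp; have [->|li] := eqVneq l i; first by rewrite eqxx.
have [elj|lj] := eqVneq l j; first by subst l; rewrite /= eq_sym (negbTE li) eqxx.
by rewrite (negbTE li) (negbTE lj).
Qed.

Definition inv_move m : move := (m.1.2, m.1.1, m.2).

Lemma inv_moveK : involutive inv_move.
Proof. by case=> [[]]. Qed.

Lemma valid_inv_move m : valid_move (inv_move m) = valid_move m.
Proof. by rewrite /valid_move eq_sym. Qed.

Lemma in_layerP m p :
  reflect (forall l, l != m.1.1 -> l != m.1.2 -> p l = m.2 l) (in_layer m p).
Proof.
apply: (iffP forallP) => lay l; last by apply/implyP => /andP[li lj]; rewrite lay.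
by move=> li lj; apply/eqP/(implyP (lay l)); rewrite li lj.
Qed.

Lemma in_layer_inv m p : in_layer (inv_move m) p = in_layer m p.
Proof. by apply/in_layerP/in_layerP => lay l li lj; apply: lay. Qed.

Lemma in_layer_psi m p : in_layer m (psi m.1.1 m.1.2 p) = in_layer m p.
Proof.
by apply/in_layerP/in_layerP => lay l li lj; rewrite -lay // psiE (negbTE li) (negbTE lj).
Qed.

Lemma move_posK m : cancel (move_pos m) (move_pos (inv_move m)).
Proof.
move=> p; rewrite /move_pos; case lay: (in_layer m p); rewrite in_layer_inv ?in_layer_psi lay //.
exact: psiK.
Qed.

Lemma move_XK m : cancel (move_X m) (move_X (inv_move m)).
Proof.
case=> p l; rewrite /move_X /=; case lay: (in_layer m p); rewrite in_layer_inv ?in_layer_psi lay //.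
by rewrite psiK transpK.
Qed.

Lemma move_X_fst m u : (move_X m u).1 = move_pos m u.1.
Proof. by rewrite /move_X /move_pos; case: ifP. Qed.

Definition move_perm m : {perm pos} := perm (can_inj (move_posK m)).
Definition move_Xperm m : {perm pos * 'I_n} := perm (can_inj (move_XK m)).

Lemma move_permV m : move_perm (inv_move m) = (move_perm m)^-1.
Proof.
apply/permP=> p; apply: (@perm_inj _ (move_perm m)); rewrite permKV !permE.
by rewrite -{1}(inv_moveK m) move_posK.
Qed.

Lemma move_XpermV m : move_Xperm (inv_move m) = (move_Xperm m)^-1.
Proof.
apply/permP=> u; apply: (@perm_inj _ (move_Xperm m)); rewrite permKV !permE.
by rewrite -{1}(inv_moveK m) move_XK.
Qed.

Lemma move_Xperm_fst m u : (move_Xperm m u).1 = move_perm m u.1.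
Proof. by rewrite !permE move_X_fst. Qed.

Definition comb_perm g := \prod_(m <- g) move_perm m.
Definition comb_Xperm g := \prod_(m <- g) move_Xperm m.

Lemma comb_perm1 m : comb_perm [:: m] = move_perm m.
Proof. exact: big_seq1. Qed.

Lemma comb_Xperm1 m : comb_Xperm [:: m] = move_Xperm m.
Proof. exact: big_seq1. Qed.

Lemma comb_permE g : comb_perm g =1 comb_pos g.
Proof.
by elim: g => [|m g IH] p; rewrite /comb_perm ?big_nil ?perm1 // big_cons permM IH permE.
Qed.

Lemma comb_XpermE g : comb_Xperm g =1 comb_X g.
Proof.
by elim: g => [|m g IH] u; rewrite /comb_Xperm ?big_nil ?perm1 // big_cons permM IH permE.
Qed.

Lemma comb_perm_cat g1 g2 : comb_perm (g1 ++ g2) = comb_perm g1 * comb_perm g2.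
Proof. exact: big_cat. Qed.

Lemma comb_Xperm_cat g1 g2 : comb_Xperm (g1 ++ g2) = comb_Xperm g1 * comb_Xperm g2.
Proof. exact: big_cat. Qed.

Lemma comb_Xperm_fst g u : (comb_Xperm g u).1 = comb_perm g u.1.
Proof. by rewrite comb_XpermE comb_permE; elim: g u => //= m g IH u; rewrite IH move_X_fst. Qed.

Lemma valid_comb_cat g1 g2 : valid_comb (g1 ++ g2) = valid_comb g1 && valid_comb g2.
Proof. exact: all_cat. Qed.

Definition inv_comb g : combination := rev (map inv_move g).

Lemma valid_inv_comb g : valid_comb (inv_comb g) = valid_comb g.
Proof. by rewrite /valid_comb all_rev all_map; apply: eq_all => m; rewrite /= valid_inv_move. Qed.

Lemma prod_inv_comb (gT : finGroupType) (act : move -> gT) g :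
  (forall m, act (inv_move m) = (act m)^-1) ->
  \prod_(m <- inv_comb g) act m = (\prod_(m <- g) act m)^-1.
Proof.
move=> actV; elim: g => [|m g IH]; first by rewrite !big_nil invg1.
by rewrite /inv_comb /= rev_cons -cats1 big_cat -/(inv_comb g) IH big_seq1 big_cons actV invMg.
Qed.

Lemma comb_permV g : comb_perm (inv_comb g) = (comb_perm g)^-1.
Proof. exact: prod_inv_comb move_permV. Qed.

Lemma comb_XpermV g : comb_Xperm (inv_comb g) = (comb_Xperm g)^-1.
Proof. exact: prod_inv_comb move_XpermV. Qed.

Lemma in_layer_self i j p : in_layer (i, j, p) p.
Proof. exact/in_layerP. Qed.

Lemma move_perm_in m p : in_layer m p -> move_perm m p = psi m.1.1 m.1.2 p.
Proof. by move=> lay; rewrite permE /move_pos lay. Qed.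

Lemma fixes_fibre_outside m p : ~~ in_layer m p -> fixes_fibre (move_Xperm m) p.
Proof. by move=> out; apply/fixes_fibreP => l; rewrite permE /move_X /= (negbTE out). Qed.

Lemma psi_fixed i j p : i != j -> (psi i j p == p) = (p i == p j) && (rev_ord (p j) == p j).
Proof.
move=> ij; have ji : j != i by rewrite eq_sym.
apply/eqP/andP => [fix_p|[/eqP pij /eqP pj]].
  have := congr1 (fun r : pos => r j) fix_p; rewrite psiE (negbTE ji) eqxx => pij.
  have := congr1 (fun r : pos => r i) fix_p; rewrite psiE eqxx => pji.
  by split; apply/eqP; rewrite // pji.
apply/ffunP=> l; rewrite psiE; have [->|li] := eqVneq l i; first by rewrite pj pij.
by have [->|] := eqVneq l j; first by rewrite pij.
Qed.

Definition separates i j l x y q :=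
  (psi x y q l != q l) && (psi i j (psi x y q) != psi x y q).

Lemma no_separating_plane i j l q : i != j -> l != i -> l != j ->
  ~~ separates i j l j l q -> ~~ separates i j l l j q ->
  rev_ord (q l) = q l /\ (q i = q l \/ q j = q l).
Proof.
move=> ij li lj; have il : i != l by rewrite eq_sym.
have jl : j != l by rewrite eq_sym.
rewrite /separates !negb_and !negbK !psi_fixed // !psiE !eqxx.
rewrite (negbTE ij) (negbTE jl) (negbTE il) (negbTE lj) rev_ordK.
case/orP=> [/eqP qjl|/andP[/eqP qil /eqP qll] _].
  case/orP=> [/eqP rjl|/andP[/eqP qil /eqP rll]]; last by split; [|left].
  by split; [rewrite -{1}qjl | right].
by split; [rewrite -qll | left; rewrite qil -qll].
Qed.

Section SeparatingPlane.
Variables (i j l x y : 'I_n) (c q : pos).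
Hypotheses (ij : i != j) (li : l != i) (lj : l != j).
Hypothesis xy_jl : (x == j) && (y == l) || (x == l) && (y == j).
Hypothesis Lq : in_layer (i, j, c) q.
Hypothesis sep : separates i j l x y q.

Lemma layers_meet_once p : in_layer (i, j, c) p ->
  in_layer (i, j, psi x y q) (move_perm (x, y, q) p) -> p = q.
Proof.
move=> /in_layerP /= Lp /in_layerP /= LD; move/in_layerP: Lq => /= Lq'.
have /andP[ql _] := sep.
have pl : p l = q l by rewrite Lp // Lq'.
have [LR|nLR] := boolP (in_layer (x, y, q) p); last first.
  by move: (LD l li lj); rewrite permE /move_pos (negbTE nLR) pl => e; move: ql; rewrite e eqxx.
have pj : p j = q j.
  move: (LD l li lj); rewrite move_perm_in //=.
  case/orP: xy_jl => /andP[/eqP-> /eqP->]; rewrite !psiE ?eqxx ?(negbTE lj) ?eqxx //.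
  exact: rev_ord_inj.
move/in_layerP: LR => /= LR; apply/ffunP => t.
have [->|tj] := eqVneq t j; first exact: pj.
have [->|tl] := eqVneq t l; first exact: pl.
have [->|ti] := eqVneq t i; last by rewrite Lp // Lq'.
by case/orP: xy_jl => /andP[/eqP ex /eqP ey]; apply: LR; rewrite ?ex ?ey // eq_sym.
Qed.

(* Witness: conjugate the move in the plane (i, j) through the layer of r q by the rotation r
   of the plane {x, y} = {j, l} through q. *)
Lemma separating_comb :
  exists gs, [/\ valid_comb gs, comb_perm gs q != q & forall p, p != q ->
    fixes_fibre (comb_Xperm gs) p || fixes_fibre (move_Xperm (i, j, c)) p].
Proof.
have /andP[_ moved_D] := sep; pose r : move := (x, y, q); pose d : move := (i, j, psi x y q).
have xy : x != y by case/orP: xy_jl => /andP[/eqP-> /eqP->]; rewrite // eq_sym.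
exists [:: r; d; inv_move r]; split.
- by rewrite /valid_comb /= valid_inv_move /valid_move /= xy ij.
- rewrite /comb_perm !big_cons big_nil mulg1 move_permV !permM.
  rewrite -(inj_eq (@perm_inj _ (move_perm r))) permKV.
  by rewrite !move_perm_in ?in_layer_self.
move=> p pq; have [Lp|nLp] := boolP (in_layer (i, j, c) p); last first.
  by rewrite fixes_fibre_outside ?orbT.
rewrite /comb_Xperm !big_cons big_nil mulg1 move_XpermV mulgA.
rewrite (fixes_fibre_conj (move_Xperm_fst r)) // fixes_fibre_outside //.
by apply: contra pq => LD; apply/eqP; apply: layers_meet_once.
Qed.

End SeparatingPlane.

End Moves.

Lemma exists_third n (i j : 'I_n) : 3 <= n -> exists l : 'I_n, (l != i) && (l != j).
Proof.
move=> hn; apply/existsP; apply: contraLR hn; rewrite negb_exists => /forallP none.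
have : [set: 'I_n] \subset [set i; j].
  by apply/subsetP=> l _; move: (none l); rewrite !inE negb_and !negbK orbC.
move/subset_leq_card; rewrite cardsT card_ord cards2 -ltnNge ltnS => /leq_trans; apply.
by case: (i != j).
Qed.

Section Boundary.
Variables k n : nat.
Local Notation pos := (pos k n).
Local Notation move := (move k n).
Implicit Types (p q : pos) (m : move) (v w : 'I_k).

Definition bnd v := ((v : nat) == 0) || ((v : nat) == k.-1).

Lemma mem_Bset p u : (u \in Bset p) = bnd (p u).
Proof. by rewrite inE. Qed.

Lemma bnd_rev v : bnd (rev_ord v) = bnd v.
Proof.
rewrite /bnd /=; have := ltn_ord v; move: (v : nat) => x lt_xk.
by apply/idP/idP => /orP[] /eqP e; apply/orP; lia.
Qed.

Lemma external_move m p : valid_move m -> external p -> external (move_perm m p).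
Proof.
case: m => [[i j] c] /= ij; rewrite permE /external /move_pos; case: ifP => //= _.
case/set0Pn=> u; rewrite mem_Bset => pu; apply/set0Pn.
have [ui|ui] := eqVneq u i; first by exists j; rewrite mem_Bset psiE eq_sym (negbTE ij) eqxx -ui.
have [uj|uj] := eqVneq u j; first by exists i; rewrite mem_Bset psiE eqxx bnd_rev -uj.
by exists u; rewrite mem_Bset psiE (negbTE ui) (negbTE uj).
Qed.

End Boundary.

Section Frame.
Variables k n : nat.
Hypothesis hk : 2 <= k.
Local Notation pos := (pos k n).
Local Notation move := (move k n).
Implicit Types (p q : pos) (t u : 'I_n) (v w : 'I_k).

Lemma mid_lt : k.-1./2 < k.
Proof. by rewrite ltn_half_double -addnn; lia. Qed.

Definition mid : 'I_k := Ordinal mid_lt.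

Hypothesis k_odd : odd k.

Lemma k_mid : k = (k.-1./2).*2.+1.
Proof.
case: k k_odd hk => // k' /= /negbTE odd_k' _.
by rewrite -{1}(odd_double_half k') odd_k'.
Qed.

Lemma rev_mid : rev_ord mid = mid.
Proof. by apply: val_inj; rewrite /= {1}k_mid -addnn; lia. Qed.

Lemma rev_fixed v : rev_ord v = v -> v = mid.
Proof.
move/(congr1 val) => /= vE; apply: val_inj => /=.
by have := k_mid; rewrite -addnn; lia.
Qed.

Lemma bnd_mid : bnd mid = false.
Proof.
rewrite /bnd /=; have := hk; rewrite {1 3}k_mid -addnn => ?.
by apply/negP => /orP[] /eqP; lia.
Qed.

Definition frame_pos t w : pos := [ffun u => if u == t then w else mid].

Lemma Bset_frame_pos t w : bnd w -> Bset (frame_pos t w) = [set t].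
Proof.
move=> bw; apply/setP=> u; rewrite mem_Bset inE ffunE.
by have [|] := eqVneq u t; rewrite ?bw ?bnd_mid.
Qed.

Lemma frame_pos_in t w : bnd w -> frame_pos t w \in frame_set k n.
Proof.
move=> bw; rewrite inE Bset_frame_pos // cards1 eqxx /=.
by apply/forallP=> u; apply/implyP; rewrite inE ffunE => /negbTE->.
Qed.

Lemma frame_setP p : p \in frame_set k n -> exists2 t, bnd (p t) & p = frame_pos t (p t).
Proof.
rewrite inE => /andP[/cards1P[t Bp] /forallP p_mid].
exists t; first by rewrite -mem_Bset Bp set11.
apply/ffunP=> u; rewrite ffunE; have [->//|ut] := eqVneq u t.
have /implyP/(_ _)/eqP pu := p_mid u; apply: val_inj; apply: pu.
by rewrite Bp inE.
Qed.

Lemma psi_frame_pos i j t w : i != j ->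
  psi i j (frame_pos t w) =
    if t == i then frame_pos j w else if t == j then frame_pos i (rev_ord w) else frame_pos t w.
Proof.
move=> ij; apply/ffunP=> u; rewrite psiE !ffunE.
have ji : j != i by rewrite eq_sym.
have [->|ti] := eqVneq t i.
  rewrite ffunE (negbTE ji) rev_mid.
  by case: eqVneq => [->|_]; rewrite ?(negbTE ij).
have [->|tj] := eqVneq t j.
  by rewrite /= ffunE; case: (u == i) => //; case: (u == j).
rewrite /= ffunE rev_mid.
have [->|_] := eqVneq u i; first by rewrite eq_sym (negbTE ti).
by have [->|_] := eqVneq u j; first by rewrite eq_sym (negbTE tj).
Qed.

Lemma frame_set_move m p :
  valid_move m -> p \in frame_set k n -> move_perm m p \in frame_set k n.
Proof.
case: m => [[i j] c] /= ij /frame_setP[t bt ->]; rewrite permE /move_pos.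
case: ifP => _ /=; last exact: frame_pos_in.
rewrite psi_frame_pos //; case: (t == i); first exact: frame_pos_in.
by case: (t == j); apply: frame_pos_in; rewrite ?bnd_rev.
Qed.

Lemma bnd_cases v w : bnd v -> bnd w -> w = v \/ w = rev_ord v.
Proof.
have := ltn_ord v; move=> lt_vk /orP[] /eqP v_eq /orP[] /eqP w_eq;
  [left|right|right|left]; apply: val_inj => /=; lia.
Qed.

Lemma frame_step t u v w : u != t -> bnd v -> bnd w ->
  exists2 m, valid_move m & move_perm m (frame_pos t v) = frame_pos u w.
Proof.
move=> ut bv bw; case: (bnd_cases bv bw) => ->.
  exists (t, u, frame_pos t v); first by rewrite /valid_move eq_sym.
  by rewrite move_perm_in ?in_layer_self //= psi_frame_pos 1?eq_sym // eqxx.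
exists (u, t, frame_pos t v) => //.
by rewrite move_perm_in ?in_layer_self //= psi_frame_pos // eq_sym (negbTE ut) eqxx.
Qed.

Lemma frame_set_comb g p :
  valid_comb g -> p \in frame_set k n -> comb_perm g p \in frame_set k n.
Proof.
elim: g p => [|m g IH] p; first by rewrite /comb_perm big_nil perm1.
case/andP=> vm vg p_fr; rewrite /comb_perm big_cons permM.
by apply: IH => //; apply: frame_set_move.
Qed.

End Frame.

Section ConnectivityClass.
Variables k n : nat.
Hypotheses (hk : 2 <= k) (hn : 3 <= n).
Local Notation pos := (pos k n).
Local Notation move := (move k n).
Local Notation combination := (combination k n).
Implicit Types (p q x : pos) (m : move) (g : combination) (s : {perm pos}).

Variables (A : {set pos}) (p0 : pos).
Hypothesis A_orbit : forall q, q \in A <-> exists g, valid_comb g /\ comb_pos g p0 = q.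

Lemma orbit_mem : p0 \in A.
Proof. by apply/A_orbit; exists [::]. Qed.

Lemma orbit_closed g p : valid_comb g -> p \in A -> comb_perm g p \in A.
Proof.
move=> vg /A_orbit[g0 [vg0 <-]]; apply/A_orbit; exists (g0 ++ g).
split; first by rewrite valid_comb_cat vg0.
by rewrite -!comb_permE comb_perm_cat permM.
Qed.

Lemma orbit_move m p : valid_move m -> p \in A -> move_perm m p \in A.
Proof. by move=> vm; rewrite -comb_perm1; apply: orbit_closed; rewrite /valid_comb /= vm. Qed.

Lemma orbit_ind (P : pos -> Prop) : P p0 ->
  (forall m y, valid_move m -> y \in A -> P y -> P (move_perm m y)) -> {in A, forall x, P x}.
Proof.
move=> P0 PS x /A_orbit[g [vg <-]]; rewrite -comb_permE.
elim: g (p0) orbit_mem P0 vg => [|m g IH] y yA Py; first by rewrite /comb_perm big_nil perm1.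
case/andP=> vm vg; rewrite /comb_perm big_cons permM.
by apply: IH vg; [apply: orbit_move | apply: PS].
Qed.

Lemma orbit_from q x : q \in A -> x \in A -> exists2 g, valid_comb g & comb_perm g q = x.
Proof.
move=> /A_orbit[g0 [vg0 <-]] /A_orbit[g [vg <-]]; exists (inv_comb g0 ++ g).
  by rewrite valid_comb_cat valid_inv_comb vg0.
by rewrite -!comb_permE comb_perm_cat permM comb_permV permK.
Qed.

Definition realizable s := perm_on A s /\ exists g, [/\ valid_comb g,
  {in A, comb_perm g =1 s} & forall u, u.1 \notin A -> comb_Xperm g u = u].

Lemma realizable1 : realizable 1.
Proof.
split; first exact: perm_on1.
by exists [::]; split => // [p|u] _; rewrite /comb_perm /comb_Xperm big_nil !perm1.
Qed.

Lemma realizableM s t : realizable s -> realizable t -> realizable (s * t).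
Proof.
move=> [s_on [g1 [vg1 g1s g1X]]] [t_on [g2 [vg2 g2t g2X]]].
split; first exact: perm_onM.
exists (g1 ++ g2); split; first by rewrite valid_comb_cat vg1.
  by move=> p pA; rewrite comb_perm_cat !permM g1s // g2t // (perm_closed _ s_on).
by move=> u uA; rewrite comb_Xperm_cat permM g1X // g2X.
Qed.

Lemma realizableV s : realizable s -> realizable s^-1.
Proof.
move=> [s_on [g [vg gs gX]]]; split; first exact: perm_onV.
exists (inv_comb g); split; first by rewrite valid_inv_comb.
  move=> p pA; rewrite comb_permV; apply: (@perm_inj _ (comb_perm g)).
  by rewrite permKV gs ?permKV // (perm_closed _ (perm_onV s_on)).
by move=> u uA; rewrite comb_XpermV -{1}(gX u uA) permK.
Qed.

Lemma realizable_commutator gs m q : valid_comb gs -> valid_move m -> q \in A ->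
  comb_perm gs q != q -> move_perm m q != q ->
  (forall p, p != q -> fixes_fibre (comb_Xperm gs) p || fixes_fibre (move_Xperm m) p) ->
  Rcyc realizable q (move_perm m q) ((comb_perm gs)^-1 q).
Proof.
move=> vgs vm qA fq mq disj.
have l0 : 'I_n := Ordinal (leq_trans (isT : 0 < 3) hn).
have Ff := comb_Xperm_fst gs; have Hh := move_Xperm_fst (inv_move m).
have hV : (move_perm (inv_move m))^-1 = move_perm m by rewrite move_permV invgK.
have HV : (move_Xperm (inv_move m))^-1 = move_Xperm m by rewrite move_XpermV invgK.
have hq : move_perm (inv_move m) q != q by rewrite move_permV permV_neq.
have disjV p : p != q ->
    fixes_fibre (comb_Xperm gs) p || fixes_fibre (move_Xperm (inv_move m)) p.
  by move/disj/orP=> [->//|/fixes_fibreV mp]; rewrite move_XpermV mp orbT.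
have wA : (comb_perm gs)^-1 q \in A.
  by rewrite -comb_permV; apply: orbit_closed; rewrite ?valid_inv_comb.
have mqA := orbit_move vm qA.
have := commutator_distinct l0 Ff Hh disjV fq hq; rewrite hV => dist.
split=> //; split.
  rewrite perm_on_moved; apply/subsetP => p; rewrite inE; apply: contraR => pA.
  by apply/eqP/cycD; apply: contraNneq pA => ->.
exists (gs ++ [:: inv_move m] ++ inv_comb gs ++ [:: m]); split.
- by rewrite !valid_comb_cat valid_inv_comb vgs /valid_comb /= valid_inv_move vm.
- move=> p _; rewrite !comb_perm_cat comb_permV !comb_perm1 !mulgA -hV.
  by rewrite (commutator_cycle l0 Ff Hh disjV fq hq).
move=> u uA; rewrite !comb_Xperm_cat comb_XpermV !comb_Xperm1 !mulgA -HV.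
apply: (commutator_fix l0 Ff Hh disjV); rewrite hV !inE.
by apply/negP => /orP[/orP[]|] /eqP e; rewrite e ?qA ?mqA ?wA in uA.
Qed.

Lemma frame_reach (t u : 'I_n) (v w : 'I_k) : odd k -> bnd v -> bnd w ->
  exists2 g, valid_comb g & comb_perm g (frame_pos hk t v) = frame_pos hk u w.
Proof.
move=> k_odd bv bw.
have step (t' u' : 'I_n) (v' w' : 'I_k) : u' != t' -> bnd v' -> bnd w' ->
    exists2 g, valid_comb g & comb_perm g (frame_pos hk t' v') = frame_pos hk u' w'.
  move=> ut bv' bw'; have [m vm mE] := frame_step hk k_odd ut bv' bw'.
  by exists [:: m]; rewrite ?comb_perm1 // /valid_comb /= vm.
have [->|ut] := eqVneq u t; last exact: step.
have [t' /andP[t't _]] := exists_third t t hn.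
have [g1 vg1 g1E] := step _ _ _ _ t't bv bv.
have tt' : t != t' by rewrite eq_sym.
have [g2 vg2 g2E] := step t' t v w tt' bv bw.
by exists (g1 ++ g2); rewrite ?valid_comb_cat ?vg1 // comb_perm_cat permM g1E.
Qed.

Hypothesis p0_external : external p0.
Hypothesis A_not_frame : ~~ is_frame_class A.

Lemma orbit_external : {in A, forall q, external q}.
Proof. by apply: orbit_ind => // m y vm _; apply: external_move. Qed.

Lemma not_almost_frame q (t : 'I_n) : q \in A -> ~ (forall u, u != t -> rev_ord (q u) = q u).
Proof.
move=> qA q_mid.
have [u /andP[ut _]] := exists_third t t hn.
have k_odd : odd k.
  have := congr1 val (q_mid u ut) => /= qu.
  have k_eq : k = (q u).*2.+1 by have := ltn_ord (q u); rewrite -addnn; lia.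
  by rewrite k_eq /= odd_double.
have q_fr : q = frame_pos hk t (q t).
  apply/ffunP=> w; rewrite ffunE; have [->//|wt] := eqVneq w t.
  exact: (rev_fixed hk k_odd (q_mid w wt)).
have bt : bnd (q t).
  have /set0Pn[w] := orbit_external qA; rewrite mem_Bset.
  have [->//|wt] := eqVneq w t.
  by rewrite {1}q_fr ffunE (negbTE wt) (bnd_mid hk k_odd).
have A_frame : A = frame_set k n.
  apply/setP=> x; apply/idP/idP => [xA|/frame_setP[w bw ->]].
    have [g vg <-] := orbit_from qA xA.
    by rewrite q_fr; apply: frame_set_comb => //; apply: frame_pos_in.
  have [g vg <-] := frame_reach t w k_odd bt bw.
  by rewrite -q_fr; apply: orbit_closed.
by move: A_not_frame; rewrite /is_frame_class k_odd A_frame eqxx.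
Qed.

Lemma move_in_Rcyc m q : valid_move m -> q \in A -> move_perm m q != q ->
  exists w, Rcyc realizable q (move_perm m q) w.
Proof.
case: m => [[i j] c] ij qA mq.
have Lq : in_layer (i, j, c) q.
  by apply: contraR mq => out; rewrite permE /move_pos (negbTE out).
have [/existsP[l /and3P[li lj sep]]|none] := boolP [exists l,
    [&& l != i, l != j & separates i j l j l q || separates i j l l j q]].
  have commute (x y : 'I_n) : (x == j) && (y == l) || (x == l) && (y == j) ->
      separates i j l x y q -> exists w, Rcyc realizable q (move_perm (i, j, c) q) w.
    move=> xy sep_xy; have [gs [vgs gq disj]] := separating_comb ij li lj xy Lq sep_xy.
    by exists ((comb_perm gs)^-1 q); apply: realizable_commutator.
  by case/orP: sep; apply: commute; rewrite !eqxx ?orbT.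
exfalso; move: none; rewrite negb_exists => /forallP none.
have mids u : u != i -> u != j -> rev_ord (q u) = q u /\ (q i = q u \/ q j = q u).
  move=> ui uj; move: (none u); rewrite ui uj /= negb_or => /andP[].
  exact: no_separating_plane.
have [l /andP[li lj]] := exists_third i j hn.
have [l_mid [qil|qjl]] := mids l li lj.
  apply: (not_almost_frame qA (t := j)) => u uj.
  have [->|ui] := eqVneq u i; first by rewrite qil.
  by case: (mids u ui uj).
apply: (not_almost_frame qA (t := i)) => u ui.
have [->|uj] := eqVneq u j; first by rewrite qjl.
by case: (mids u ui uj).
Qed.

Lemma attached_orbit m c : Rcyc realizable p0 (move_perm m p0) c ->
  {in A, forall x, attached realizable p0 (move_perm m p0) x}.
Proof.
move=> Rc; apply: orbit_ind; first by constructor 1.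
move=> m' y vm' yA ay; have [->//|my] := eqVneq (move_perm m' y) y.
have [w Rw] := move_in_Rcyc vm' yA my.
exact: (@attached_step _ realizable realizableM realizableV _ _ _ Rc _ _ _ ay Rw).
Qed.

Lemma realizable_even s : perm_on A s -> ~~ odd_perm s -> realizable s.
Proof.
move=> s_on s_even.
have [/existsP[m /andP[vm mp0]]|p0_fixed] :=
  boolP [exists m : move, valid_move m && (move_perm m p0 != p0)].
  have [c /attached_orbit att] := move_in_Rcyc vm orbit_mem mp0.
  have Rab w : w \in A -> w != p0 -> w != move_perm m p0 ->
      Rcyc realizable p0 (move_perm m p0) w.
    move=> wA wp0 wm; case: (att w wA) => [e|e|//]; first by move: wp0; rewrite e eqxx.
    by move: wm; rewrite e eqxx.
  apply: (even_perm_on_R realizable1 realizableM _ s_on s_even) => x y z xA yA zA xyz.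
  exact: (proj2 (Rcyc_all realizableM realizableV Rab xA yA zA xyz)).
have A_p0 : {in A, forall x, x = p0}.
  move: p0_fixed; rewrite negb_exists => /forallP p0_fixed.
  apply: orbit_ind => // m y vm _ ->; apply/eqP.
  by move: (p0_fixed m); rewrite negb_and vm /= negbK.
suff -> : s = 1 by exact: realizable1.
apply/permP=> p; rewrite perm1; apply/eqP; apply: contraT => sp.
have pA : p \in A by apply: (subsetP s_on); rewrite inE.
by move: sp; rewrite (A_p0 _ pA) (A_p0 (s p0)) ?eqxx // (perm_closed _ s_on) -(A_p0 _ pA).
Qed.

End ConnectivityClass.

Theorem mainTheorem4 (k n : nat) (hk : 2 <= k) (hn : 3 <= n)
    (A : {set pos k n}) (pi : {perm pos k n}) :
  connectivity_class A -> ~~ is_frame_class A ->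
  perm_on A pi -> ~~ odd_perm pi ->
  exists g : combination k n, valid_comb g /\
    (forall p, p \in A -> comb_pos g p = pi p) /\
    (forall q : pos k n, external q -> q \notin A ->
       forall l, l \in Bset q -> comb_X g (q, l) = (q, l)).
Proof.
move=> [p0 [p0_ext A_orbit]] A_not_frame pi_on pi_even.
have [_ [g [vg g_pi g_fix]]] := realizable_even hk hn A_orbit p0_ext A_not_frame pi_on pi_even.
exists g; split=> //; split=> [p pA|q _ qA l _]; first by rewrite -comb_permE g_pi.
by rewrite -comb_XpermE g_fix.
Qed.
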